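(* Let \(a,b,c\) be positive integers, \(m\) a positive integer that is not a perfect square, with \(\gcd(am,b^2-c^2m)=1\), and let \(A,B\in\mathbb Z\). If \((x_0,y_0,z_0,w_0)\in\mathbb Z^4\) and \((x',y',z',w')\in\mathbb Z^4\) are both solutions of \(a\sqrt m(x+y\sqrt m)+(b+c\sqrt m)(z+w\sqrt m)=A+B\sqrt m\), then \(am\mid z_0-z'\) and \(a\mid w_0-w'\). *)

From Stdlib Require Export ZArith Reals.

Definition lhs9 (a b c m x y z w : Z) : R :=
  (IZR a * sqrt (IZR m) * (IZR x + IZR y * sqrt (IZR m))
   + (IZR b + IZR c * sqrt (IZR m)) * (IZR z + IZR w * sqrt (IZR m)))%R.

Definition rhs9 (m A B : Z) : R := (IZR A + IZR B * sqrt (IZR m))%R.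

(* Since sqrt m is irrational, both sides of the equation can be compared
   coefficientwise in Z[sqrt m]; subtracting the two solutions gives
   a m dy + b dz + c m dw = 0 and a dx + b dw + c dz = 0.  Eliminating between
   these shows that (b^2 - c^2 m) dz is a multiple of a m and (b^2 - c^2 m) dw
   a multiple of a, and b^2 - c^2 m is coprime to a m. *)

From Stdlib Require Import ZArith Reals Lia Lra Psatz Znumtheory.

Open Scope Z_scope.

Section NonSquare.

Variable m : Z.
Hypothesis m_pos : 0 < m.
Hypothesis m_nonsquare : ~ (exists k : Z, m = k * k).

(* Descent: with s = floor (sqrt m), a solution (Q, P) of m Q^2 = P^2 with
   Q > 0 yields the smaller solution (P - s Q, m Q - s P). *)
Lemma nonsquare_mul_sq_eq_sq Q P :
  0 <= Q -> 0 <= P -> m * Q * Q = P * P -> Q = 0.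
Proof.
  revert P; induction Q as [Q IH] using (well_founded_induction (Z.lt_wf 0)).
  intros P hQ hP hQP.
  destruct (Z.eq_dec Q 0) as [|hQ0]; [assumption|exfalso].
  destruct (Z.sqrt_spec m ltac:(lia)) as [hs_le hs_lt].
  set (s := Z.sqrt m) in *; unfold Z.succ in hs_lt.
  assert (hs0 : 0 <= s) by apply Z.sqrt_nonneg.
  assert (hs_ne : s * s <> m) by (intro; apply m_nonsquare; exists s; lia).
  assert (hQpos : 0 < Q) by lia.
  assert (hlo : s * Q < P).
  { apply Z.nle_gt; intro hle.
    assert (P * P <= s * Q * (s * Q)) by nia. nia. }
  assert (hhi : P < (s + 1) * Q).
  { apply Z.nle_gt; intro hle.
    assert ((s + 1) * Q * ((s + 1) * Q) <= P * P) by nia. nia. }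
  assert (P - s * Q = 0); [|lia].
  assert (hdec : 0 <= P - s * Q < Q) by nia.
  apply (IH _ hdec (m * Q - s * P)); nia.
Qed.

Lemma sqrt_nonsquare_coeff_eq0 P Q :
  (IZR P + IZR Q * sqrt (IZR m))%R = 0%R -> P = 0 /\ Q = 0.
Proof.
  intro h.
  assert (hr : (sqrt (IZR m) * sqrt (IZR m) = IZR m)%R)
    by (apply sqrt_sqrt, IZR_le; lia).
  assert (hPQ : m * Q * Q = P * P).
  { apply eq_IZR; rewrite !mult_IZR.
    replace (IZR P) with (- (IZR Q * sqrt (IZR m)))%R by lra.
    set (r := sqrt (IZR m)) in *; rewrite <- hr; ring. }
  assert (hQ : Q = 0); [|subst Q; split; [apply eq_IZR; lra | reflexivity]].
  enough (Z.abs Q = 0) by lia.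
  apply (nonsquare_mul_sq_eq_sq _ (Z.abs P)); try lia; nia.
Qed.

Lemma sqrt_nonsquare_coeff_inj P Q P' Q' :
  (IZR P + IZR Q * sqrt (IZR m))%R = (IZR P' + IZR Q' * sqrt (IZR m))%R ->
  P = P' /\ Q = Q'.
Proof.
  intro h.
  destruct (sqrt_nonsquare_coeff_eq0 (P - P') (Q - Q')) as [hP hQ]; [|lia].
  rewrite !minus_IZR; lra.
Qed.

End NonSquare.

Lemma lhs9_expand a b c m x y z w : 0 <= m ->
  lhs9 a b c m x y z w =
  (IZR (a * m * y + b * z + c * m * w)
   + IZR (a * x + b * w + c * z) * sqrt (IZR m))%R.
Proof.
  intro hm; unfold lhs9.
  assert (hr : (sqrt (IZR m) * sqrt (IZR m) = IZR m)%R)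
    by (apply sqrt_sqrt, IZR_le; lia).
  rewrite !plus_IZR, !mult_IZR.
  set (r := sqrt (IZR m)) in *; rewrite <- hr; ring.
Qed.

Lemma norm_mul_solution_diff a b c m dx dy dz dw :
  a * m * dy + b * dz + c * m * dw = 0 ->
  a * dx + b * dw + c * dz = 0 ->
  (b ^ 2 - c ^ 2 * m) * dz = (c * dx - b * dy) * (a * m) /\
  (b ^ 2 - c ^ 2 * m) * dw = (c * m * dy - b * dx) * a.
Proof.
  intros e1 e2; split.
  - transitivity (b * (a * m * dy + b * dz + c * m * dw)
      - c * m * (a * dx + b * dw + c * dz)
      + (c * dx - b * dy) * (a * m)); [ring|].
    rewrite e1, e2; ring.
  - transitivity (b * (a * dx + b * dw + c * dz)
      - c * (a * m * dy + b * dz + c * m * dw)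
      + (c * m * dy - b * dx) * a); [ring|].
    rewrite e1, e2; ring.
Qed.

Theorem lemma9 (a b c m A B x0 y0 z0 w0 x1 y1 z1 w1 : Z)
  (ha : (0 < a)%Z) (hb : (0 < b)%Z) (hc : (0 < c)%Z) (hm : (0 < m)%Z)
  (hsq : ~ (exists k : Z, m = (k * k)%Z))
  (hgcd : Z.gcd (a * m) (b ^ 2 - c ^ 2 * m) = 1%Z)
  (h0 : lhs9 a b c m x0 y0 z0 w0 = rhs9 m A B)
  (h1 : lhs9 a b c m x1 y1 z1 w1 = rhs9 m A B) :
  (a * m | z0 - z1)%Z /\ (a | w0 - w1)%Z.
Proof.
  unfold rhs9 in h0, h1; rewrite lhs9_expand in h0, h1 by lia.
  destruct (sqrt_nonsquare_coeff_inj m hm hsq _ _ _ _ h0) as [hA0 hB0].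
  destruct (sqrt_nonsquare_coeff_inj m hm hsq _ _ _ _ h1) as [hA1 hB1].
  destruct (norm_mul_solution_diff a b c m (x0 - x1) (y0 - y1) (z0 - z1) (w0 - w1))
    as [hz hw]; [lia | lia |].
  apply Zgcd_1_rel_prime in hgcd.
  split.
  - apply (Gauss _ (b ^ 2 - c ^ 2 * m)); [|exact hgcd].
    exists (c * (x0 - x1) - b * (y0 - y1)); exact hz.
  - apply (Gauss _ (b ^ 2 - c ^ 2 * m)).
    + exists (c * m * (y0 - y1) - b * (x0 - x1)); exact hw.
    + apply (rel_prime_div _ _ _ hgcd); exists m; ring.
Qed.
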